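(* An nfa $N$ accepting a regular language $L$ is subatomic if and only if the transition monoid of the dfa $\mathrm{rsc}(N^r)$ is isomorphic (as a monoid) to the syntactic monoid $\mathrm{Syn}(L^r)$.
   Context: An nfa $N=(Q,\delta,I,F)$: finite states, transition relations $\delta_a$, initial states $I$, final states $F$ (several initial states allowed). $N^r$ is the reverse nfa (transitions reversed, $I$ and $F$ swapped), accepting $L^r=\{w^r:w\in L\}$. $\mathrm{rsc}(N)$ is the dfa whose states are the subsets of $Q$ reachable from $I$ under $X\mapsto\delta_a[X]$, initial state $I$, final states the subsets meeting $F$. $N$ is subatomic if every state of $N$ accepts a language in $\mathrm{BLRQ}(L)$, the boolean subalgebra of $\mathcal{P}(\Sigma^* )$ generated by all two-sided derivatives $u^{-1}Lv^{-1}=\{w:uwv\in L\}$. The transition monoid of a dfa $D$ with transition functions $\delta_a$ is $\{\delta_w:w\in\Sigma^*\}$, where $\delta_w=\delta_{a_n}\circ\cdots\circ\delta_{a_1}$ for $w=a_1\cdots a_n$, with multiplication $\delta_v\cdot\delta_w=\delta_{vw}$ and unit $\delta_\epsilon$. The syntactic monoid $\mathrm{Syn}(K)$ is $\Sigma^*$ modulo the congruence $v\equiv_K w\iff\forall x,y\,(xvy\in K\Leftrightarrow xwy\in K)$. *)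

From mathcomp Require Import all_boot.

From Stdlib Require Import ClassicalEpsilon.

Set Implicit Arguments.
Unset Strict Implicit.
Unset Printing Implicit Defensive.

Definition lang (Sigma : Type) := seq Sigma -> bool.

(** [delta a p q] means there is an [a]-transition from [p] to [q].
    Several initial states are allowed. *)
Record nfa (Sigma Q : finType) := Nfa {
  delta : Sigma -> Q -> Q -> bool;
  init : {set Q};
  final : {set Q}
}.

Section NFA.
Variables (Sigma Q : finType).
Implicit Types (N : nfa Sigma Q) (X : {set Q}) (w : seq Sigma).

Definition step N (a : Sigma) X : {set Q} :=
  [set q | [exists p in X, delta N a p q]].

Definition steps N w X : {set Q} := foldl (fun Y a => step N a Y) X w.

Definition set_lang N X : lang Sigma := fun w => steps N w X :&: final N != set0.
Definition state_lang N (q : Q) : lang Sigma := set_lang N [set q].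
Definition nfa_lang N : lang Sigma := set_lang N (init N).

Definition rev_nfa N : nfa Sigma Q :=
  Nfa (fun a p q => delta N a q p) (final N) (init N).

(** States of the dfa [rsc N]: subsets of [Q] reachable from [init N]. *)
Definition rsc_state N := {X : {set Q} | exists u, X = steps N u (init N)}.

Lemma steps_cat N u v X : steps N (u ++ v) X = steps N v (steps N u X).
Proof. by rewrite /steps foldl_cat. Qed.

Lemma rsc_step_proof N w (X : rsc_state N) :
  exists u, steps N w (proj1_sig X) = steps N u (init N).
Proof.
case: X => X [u Hu] /=; exists (u ++ w); by rewrite steps_cat Hu.
Qed.

Definition rsc_trans N w (X : rsc_state N) : rsc_state N :=
  exist _ (steps N w (proj1_sig X)) (rsc_step_proof w X).

End NFA.

Inductive bexpr (Sigma : Type) :=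
| BQuot of seq Sigma & seq Sigma
| BEmpty
| BCompl of bexpr Sigma
| BUnion of bexpr Sigma & bexpr Sigma.

Fixpoint beval (Sigma : Type) (L : lang Sigma) (e : bexpr Sigma) : lang Sigma :=
  match e with
  | BQuot u v => fun w => L (u ++ w ++ v)
  | BEmpty => fun _ => false
  | BCompl e1 => fun w => ~~ beval L e1 w
  | BUnion e1 e2 => fun w => beval L e1 w || beval L e2 w
  end.

Definition in_BLRQ (Sigma : Type) (L K : lang Sigma) : Prop :=
  exists e : bexpr Sigma, forall w, K w = beval L e w.

Definition subatomic (Sigma Q : finType) (N : nfa Sigma Q) : Prop :=
  forall q : Q, in_BLRQ (nfa_lang N) (state_lang N q).

Record monoid_str := MonoidStr {
  mcar : Type;
  mmul : mcar -> mcar -> mcar;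
  munit : mcar
}.

Definition monoid_iso (M1 M2 : monoid_str) : Prop :=
  exists f : mcar M1 -> mcar M2,
    bijective f /\
    (forall x y, f (mmul x y) = mmul (f x) (f y)) /\
    f (munit M1) = munit M2.

(** The monoid [{ r w | w \in Sigma^* }] with multiplication
    [r v . r w = r (v w)] and unit [r epsilon]; used only when the kernel of
    [r] is a congruence of [Sigma^*] (so the product is well defined). *)
Section WordQuotient.
Variables (Sigma T : Type) (r : seq Sigma -> T).

Definition wq_car := {t : T | exists w, t = r w}.
Definition wq_elt (w : seq Sigma) : wq_car := exist _ (r w) (ex_intro _ w erefl).
Definition wq_rep (t : wq_car) : seq Sigma :=
  proj1_sig (constructive_indefinite_description _ (proj2_sig t)).
Definition wq_mul (s t : wq_car) : wq_car := wq_elt (wq_rep s ++ wq_rep t).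

Definition word_quotient_monoid : monoid_str :=
  MonoidStr wq_mul (wq_elt [::]).
End WordQuotient.

Definition rsc_transition_monoid (Sigma Q : finType) (N : nfa Sigma Q) :=
  word_quotient_monoid (fun w : seq Sigma => @rsc_trans Sigma Q N w).

(** Syntactic monoid of K: [Sigma^*] modulo [v == w <-> forall x y,
    (x v y \in K <-> x w y \in K)]; the class of [w] is represented by its
    context function [fun x y => K (x w y)]. *)
Definition syn_ctx (Sigma : Type) (K : lang Sigma) (w : seq Sigma) :=
  fun x y : seq Sigma => K (x ++ w ++ y).

Definition syntactic_monoid (Sigma : Type) (K : lang Sigma) :=
  word_quotient_monoid (syn_ctx K).

Definition rev_lang (Sigma : Type) (L : lang Sigma) : lang Sigma :=
  fun w => L (rev w).

From mathcomp Require Import all_boot.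
From Stdlib Require Import FunctionalExtensionality ProofIrrelevance ClassicalEpsilon.

Set Implicit Arguments.
Unset Strict Implicit.
Unset Printing Implicit Defensive.

(* Both monoids in the theorem are quotients of Sigma^* by the kernel of a map
   on words: the transition monoid of rsc(N^r) by  w |-> delta^r_w, and
   Syn(L^r) by the context map  w |-> (x, y |-> L^r (x w y)).  For the reversed
   automaton, delta^r_v = delta^r_w says exactly that  rev v  and  rev w  are
   right-equivalent in N (every state accepts  rev v y  iff it accepts
   rev w y), while equality of contexts says that  rev v  and  rev w  are
   syntactically equivalent for L.  Right equivalence always implies syntactic
   equivalence, so Syn(L^r) is a quotient of the (finite) transition monoid.
   - N is subatomic iff syntactic equivalence implies right equivalence: a
     language of BLRQ(L) is a union of syntactic classes, and conversely, as
     L is regular, finitely many contexts determine the syntactic class of a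
     word, so every union of classes is a finite boolean combination of
     quotients u^{-1} L v^{-1}.
   - Equal kernels give the isomorphism w |-> w.  Conversely, an abstract
     isomorphism composed with the canonical surjection is a surjective
     self-map of a finite monoid, hence injective, so the kernels agree. *)

Lemma sig_eq (A : Type) (P : A -> Prop) (x y : sig P) :
  proj1_sig x = proj1_sig y -> x = y.
Proof. by apply: eq_sig_hprop => a; apply: proof_irrelevance. Qed.

Lemma finType_surj_inj (K : finType) (G : K -> K) :
  (forall k, exists j, G j = k) -> injective G.
Proof.
move=> Gsurj.
pose h k := odflt k [pick j | G j == k].
have hK : cancel h G.
  move=> k; rewrite /h; case: pickP => [j /eqP //|].
  by case: (Gsurj k) => j Gj /(_ j); rewrite Gj eqxx.
have [h' hh' h'h] := injF_bij (can_inj hK).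
have G_h' : G =1 h' by move=> x; rewrite -{1}(h'h x) hK.
by move=> x y; rewrite !G_h' => /(can_inj h'h).
Qed.

Lemma surj_inj_of_finite_code (T : Type) (K : finType) (code : T -> K)
    (g : T -> T) :
  injective code -> (forall t, exists s, g s = t) -> injective g.
Proof.
move=> code_inj gsurj.
pose G k := match excluded_middle_informative (exists t, code t = k) with
  | left ex => code (g (proj1_sig (constructive_indefinite_description _ ex)))
  | right _ => k end.
have G_code s : G (code s) = code (g s).
  rewrite /G; case: excluded_middle_informative => [ex|[]]; last by exists s.
  by case: constructive_indefinite_description => t /= /code_inj ->.
have Ginj : injective G.
  apply: finType_surj_inj => k.
  case: (excluded_middle_informative (exists t, code t = k)) => [[t <-]|nex].
    by have [s <-] := gsurj t; exists (code s); rewrite G_code.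
  by exists k; rewrite /G; case: excluded_middle_informative.
by move=> x y gxy; apply/code_inj/Ginj; rewrite !G_code gxy.
Qed.

Section WordQuotients.
Variable Sigma : Type.

Definition ker_sub (T1 T2 : Type) (r : seq Sigma -> T1) (s : seq Sigma -> T2) :=
  forall v w, r v = r w -> s v = s w.

Definition congruence (T : Type) (s : seq Sigma -> T) :=
  forall a a' b b', s a = s a' -> s b = s b' -> s (a ++ b) = s (a' ++ b').

Lemma wq_elt_rep (T : Type) (r : seq Sigma -> T) (t : wq_car r) :
  wq_elt r (wq_rep t) = t.
Proof.
apply: sig_eq; rewrite /wq_rep /=.
by case: constructive_indefinite_description => w /= ->.
Qed.

Lemma wq_rep_elt (T : Type) (r : seq Sigma -> T) (w : seq Sigma) :
  r (wq_rep (wq_elt r w)) = r w.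
Proof. by rewrite /wq_rep; case: constructive_indefinite_description. Qed.

Lemma wq_elt_eq (T : Type) (r : seq Sigma -> T) v w :
  r v = r w -> wq_elt r v = wq_elt r w.
Proof. by move=> rvw; apply: sig_eq. Qed.

(* The canonical map  r w |-> s w, well defined when ker r <= ker s. *)
Definition wq_map (T1 T2 : Type) (r : seq Sigma -> T1) (s : seq Sigma -> T2)
  (t : wq_car r) : wq_car s := wq_elt s (wq_rep t).

Lemma wq_map_elt (T1 T2 : Type) (r : seq Sigma -> T1) (s : seq Sigma -> T2) w :
  ker_sub r s -> wq_map s (wq_elt r w) = wq_elt s w.
Proof. by move=> rs; apply/wq_elt_eq/rs; rewrite wq_rep_elt. Qed.

Lemma wq_iso (T1 T2 : Type) (r : seq Sigma -> T1) (s : seq Sigma -> T2) :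
  ker_sub r s -> ker_sub s r -> congruence s ->
  monoid_iso (word_quotient_monoid r) (word_quotient_monoid s).
Proof.
move=> rs sr s_cong; exists (wq_map s); split; [|split].
- by exists (wq_map r) => t; rewrite -[RHS]wq_elt_rep; apply: wq_map_elt.
- move=> x y /=; rewrite /wq_mul wq_map_elt //.
  by apply: wq_elt_eq; apply: s_cong; rewrite wq_rep_elt.
- exact: wq_map_elt.
Qed.

(* If ker r <= ker s, the quotient by r is finite and the two quotients are
   isomorphic, then the kernels are equal (only the bijection is used). *)
Lemma wq_iso_ker_sub (T1 T2 : Type) (r : seq Sigma -> T1) (s : seq Sigma -> T2)
    (K : finType) (code : wq_car r -> K) :
  injective code -> ker_sub r s ->
  monoid_iso (word_quotient_monoid r) (word_quotient_monoid s) -> ker_sub s r.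
Proof.
move=> code_inj rs [f [[finv fK fK'] _]] v w svw.
pose g (t : wq_car r) : wq_car r := finv (wq_map s t).
have g_elt u : g (wq_elt r u) = finv (wq_elt s u) by rewrite /g wq_map_elt.
have gsurj t : exists t', g t' = t.
  by exists (wq_elt r (wq_rep (f t))); rewrite g_elt wq_elt_rep fK.
have ginj := surj_inj_of_finite_code code_inj gsurj.
have : g (wq_elt r v) = g (wq_elt r w) by rewrite !g_elt (wq_elt_eq svw).
by move/ginj/(congr1 (@proj1_sig _ _)).
Qed.

End WordQuotients.

Section Syntactic.
Variables (Sigma : Type) (L : lang Sigma).

Definition syn_equiv (v w : seq Sigma) := forall x y, L (x ++ v ++ y) = L (x ++ w ++ y).

Lemma syn_equiv_catr v w y : syn_equiv v w -> syn_equiv (v ++ y) (w ++ y).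
Proof. by move=> vw x z; rewrite -!catA. Qed.

Lemma BLRQ_saturated K v w : in_BLRQ L K -> syn_equiv v w -> K v = K w.
Proof.
move=> [e He] vw; rewrite !He {He}.
elim: e => [x y| |e IH|e1 IH1 e2 IH2] /=.
- exact: vw.
- by [].
- by rewrite IH.
- by rewrite IH1 IH2.
Qed.

Definition profile (P : seq (seq Sigma * seq Sigma)) (w : seq Sigma) : seq bool :=
  [seq L (c.1 ++ w ++ c.2) | c <- P].

Lemma profile_fun_in_BLRQ P (f : seq bool -> bool) :
  in_BLRQ L (fun w => f (profile P w)).
Proof.
elim: P f => [|c P IH] f.
  by exists (if f [::] then BCompl (BEmpty Sigma) else BEmpty Sigma); case: (f [::]).
have [e1 He1] := IH (fun bs => f (true :: bs)).
have [e0 He0] := IH (fun bs => f (false :: bs)).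
pose BAnd (e e' : bexpr Sigma) := BCompl (BUnion (BCompl e) (BCompl e')).
pose q := BQuot c.1 c.2.
exists (BUnion (BAnd q e1) (BAnd (BCompl q) e0)) => w /=.
by rewrite -He1 -He0; case: (L _); case: (f _); case: (f _).
Qed.

Lemma saturated_in_BLRQ P K :
  (forall v w, profile P v = profile P w -> syn_equiv v w) ->
  (forall v w, syn_equiv v w -> K v = K w) -> in_BLRQ L K.
Proof.
move=> basis K_sat.
pose f bs := if excluded_middle_informative (exists2 v, profile P v = bs & K v)
  then true else false.
have [e He] := profile_fun_in_BLRQ P f; exists e => w; rewrite -He /f.
case: excluded_middle_informative => [[v pvw Kv]|no_v].
  by rewrite -(K_sat _ _ (basis _ _ pvw)).
by case Kw: (K w) => //; case: no_v; exists w.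
Qed.

Lemma syn_ctx_rev_eq v w :
  syn_ctx (rev_lang L) v = syn_ctx (rev_lang L) w <-> syn_equiv (rev v) (rev w).
Proof.
rewrite /syn_ctx /rev_lang; split => [vw x y | vw].
  by have := congr1 (fun c => c (rev y) (rev x)) vw; rewrite /= !rev_cat !revK -!catA.
apply: functional_extensionality => x; apply: functional_extensionality => y.
by rewrite !rev_cat -!catA vw.
Qed.

End Syntactic.

Lemma syn_ctx_congruence (Sigma : Type) (K : lang Sigma) : congruence (syn_ctx K).
Proof.
move=> a a' b b' aa' bb'.
apply: functional_extensionality => x; apply: functional_extensionality => y.
have := congr1 (fun c => c x (b ++ y)) aa'; rewrite /syn_ctx /= !catA => ->.
by have := congr1 (fun c => c (x ++ a') y) bb'; rewrite /syn_ctx /= -!catA => ->.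
Qed.

Section Automaton.
Variables (Sigma Q : finType) (N : nfa Sigma Q).

Lemma mem_steps w X q :
  (q \in steps N w X) = [exists p in X, q \in steps N w [set p]].
Proof.
elim: w X q => [|a w IH] X q.
  apply/idP/existsP => [qX|[p /andP[pX]]]; last by rewrite in_set1 => /eqP ->.
  by exists q; rewrite qX in_set1 eqxx.
rewrite /steps /= -!/(steps N w _) IH.
apply/existsP/existsP => [[p' /andP[]]|[p /andP[pX]]].
  rewrite inE => /existsP [p /andP[pX pp']] p'q.
  exists p; rewrite pX /= IH; apply/existsP; exists p'.
  by rewrite p'q inE andbT; apply/existsP; exists p; rewrite in_set1 eqxx.
rewrite IH => /existsP [p' /andP[]]; rewrite inE => /existsP [p1 /andP[]].
rewrite in_set1 => /eqP -> pp' p'q.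
by exists p'; rewrite p'q andbT inE; apply/existsP; exists p; rewrite pX.
Qed.

Lemma set_lang_union X w : set_lang N X w = [exists p in X, state_lang N p w].
Proof.
apply/set0Pn/existsP => [[q]|[p /andP[pX /set0Pn [q]]]].
  rewrite inE mem_steps => /andP[/existsP [p /andP[pX pq]] qF].
  by exists p; rewrite pX; apply/set0Pn; exists q; rewrite inE pq.
rewrite inE => /andP[pq qF]; exists q; rewrite inE qF andbT mem_steps.
by apply/existsP; exists p; rewrite pX.
Qed.

Lemma mem_rev_steps u X q :
  (q \in steps (rev_nfa N) u X) = (steps N (rev u) [set q] :&: X != set0).
Proof.
elim: u X q => [|a u IH] X q.
  apply/idP/set0Pn => [qX|[p]]; first by exists q; rewrite inE in_set1 eqxx.
  by rewrite inE in_set1 => /andP[/eqP ->].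
rewrite /steps /= -/(steps _ u _) IH rev_cons -cats1 -/(steps N _ _) steps_cat.
rewrite {2}/steps /=.
apply/set0Pn/set0Pn => [[p]|[p']]; rewrite !inE.
  move=> /andP[qp] /existsP [p' /andP[p'X p'p]].
  by exists p'; rewrite !inE p'X andbT; apply/existsP; exists p; rewrite qp.
move=> /andP[/existsP [p /andP[qp pp']] p'X].
by exists p; rewrite !inE qp; apply/existsP; exists p'; rewrite p'X.
Qed.

Definition right_equiv (v w : seq Sigma) :=
  forall q y, state_lang N q (v ++ y) = state_lang N q (w ++ y).

(* The acceptance of [x v y] only depends on [steps N v] and on the pair of
   sets of states reached by [x] and accepting [y]. *)
Definition context_type (c : seq Sigma * seq Sigma) : {set Q} * {set Q} :=
  (steps N c.1 (init N), [set p | state_lang N p c.2]).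

Lemma nfa_lang_context_type c v :
  nfa_lang N (c.1 ++ v ++ c.2) =
  [exists p in steps N v (context_type c).1, p \in (context_type c).2].
Proof.
rewrite /nfa_lang /set_lang !steps_cat -/(set_lang N _ c.2) set_lang_union.
by apply: eq_existsb => p; rewrite inE.
Qed.

Lemma nfa_lang_cat x v :
  nfa_lang N (x ++ v) = [exists p in steps N x (init N), state_lang N p v].
Proof. by rewrite /nfa_lang /set_lang steps_cat -/(set_lang N _ v) set_lang_union. Qed.

Lemma right_equiv_syn v w : right_equiv v w -> syn_equiv (nfa_lang N) v w.
Proof. by move=> vw x y; rewrite !nfa_lang_cat; apply: eq_existsb => p; rewrite vw. Qed.

(* Finitely many contexts, one per realised context type, determine the
   syntactic class of a word: L is regular. *)
Lemma nfa_context_basis : exists P, forall v w,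
  profile (nfa_lang N) P v = profile (nfa_lang N) P w -> syn_equiv (nfa_lang N) v w.
Proof.
pose pick_ctx k := epsilon (inhabits ([::], [::])) (fun c => context_type c = k).
exists [seq pick_ctx k | k <- enum [set: {set Q} * {set Q}]] => v w /esym/eq_in_map pvw x y.
pose c := pick_ctx (context_type (x, y)).
have c_type : context_type c = context_type (x, y).
  by apply: (epsilon_spec (inhabits ([::], [::])) (fun c => context_type c = _)); exists (x, y).
have := pvw c (map_f _ _); rewrite mem_enum inE => /(_ isT).
by rewrite !(nfa_lang_context_type c) !(nfa_lang_context_type (x, y)) c_type => ->.
Qed.

Lemma subatomic_iff_syn_right :
  subatomic N <-> forall v w, syn_equiv (nfa_lang N) v w -> right_equiv v w.
Proof.
split => [sub v w vw q y | syn_right q].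
  exact: BLRQ_saturated (sub q) (syn_equiv_catr y vw).
have [P basis] := nfa_context_basis.
apply: saturated_in_BLRQ basis _ => v w /syn_right /(_ q [::]).
by rewrite !cats0.
Qed.

Definition rev_trans (w : seq Sigma) := @rsc_trans _ _ (rev_nfa N) w.

Lemma rev_trans_eq v w : rev_trans v = rev_trans w <-> right_equiv (rev v) (rev w).
Proof.
split => [vw q y | vw].
  pose X : rsc_state (rev_nfa N) := exist _ _ (ex_intro _ (rev y) erefl).
  have := congr1 (fun t => proj1_sig (t X)) vw; rewrite /= -!steps_cat.
  by move/setP/(_ q); rewrite !mem_rev_steps !rev_cat revK.
apply: functional_extensionality => -[X [u X_u]]; apply: sig_eq => /=.
apply/setP => q; rewrite X_u -!steps_cat !mem_rev_steps !rev_cat.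
exact: vw q (rev u).
Qed.

Lemma rev_trans_ker_sub_syn : ker_sub rev_trans (syn_ctx (rev_lang (nfa_lang N))).
Proof. by move=> v w /rev_trans_eq /right_equiv_syn /syn_ctx_rev_eq. Qed.

Lemma subatomic_iff_ker_sub :
  subatomic N <-> ker_sub (syn_ctx (rev_lang (nfa_lang N))) rev_trans.
Proof.
rewrite subatomic_iff_syn_right; split => [syn_right v w | ker v w].
  by move/syn_ctx_rev_eq/syn_right/rev_trans_eq.
rewrite -(revK v) -(revK w) => /syn_ctx_rev_eq/ker/rev_trans_eq.
by rewrite !revK.
Qed.

(* The transition monoid of rsc(N^r) is finite: an element is determined by
   its action on all subsets of states. *)
Definition rev_trans_code (t : wq_car rev_trans) : {ffun {set Q} -> {set Q}} :=
  [ffun X => steps (rev_nfa N) (wq_rep t) X].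

Lemma rev_trans_code_inj : injective rev_trans_code.
Proof.
move=> s t st; rewrite -(wq_elt_rep s) -(wq_elt_rep t); apply: wq_elt_eq.
apply: functional_extensionality => X; apply: sig_eq => /=.
by have /ffunP/(_ (proj1_sig X)) := st; rewrite !ffunE.
Qed.

End Automaton.

Theorem theorem4p12 (Sigma Q : finType) (N : nfa Sigma Q) :
  subatomic N <->
  monoid_iso (rsc_transition_monoid (rev_nfa N))
             (syntactic_monoid (rev_lang (nfa_lang N))).
Proof.
rewrite subatomic_iff_ker_sub; split => [ker | iso].
  exact: wq_iso (@rev_trans_ker_sub_syn _ _ N) ker (@syn_ctx_congruence _ _).
exact: wq_iso_ker_sub (@rev_trans_code_inj _ _ N) (@rev_trans_ker_sub_syn _ _ N) iso.
Qed.
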